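(* Let $p$ be a prime, let $\{a^1,\ldots,a^n\}\subseteq \mathbb{Z}^m$ be a $p$-adic generating set for a cone, and let $F$ be a nonempty face of $\operatorname{cone}\{a^1,\ldots,a^n\}$. Then $\{a^i:a^i\in F\}$ is a $p$-adic generating set for the cone $F$.
   Context: A $p$-adic rational is a number $a/p^k$ with $a,k\in\mathbb{Z}$, $k\ge0$. A finite set $S\subseteq\mathbb{Z}^m$ is a $p$-adic generating set for a cone if every integral vector in the conic hull of $S$ is a conic combination of the elements of $S$ with $p$-adic coefficients. *)

From HB Require Import structures.
From mathcomp Require Import all_boot all_order all_algebra.
From mathcomp Require Import reals.
Set Implicit Arguments. Unset Strict Implicit. Unset Printing Implicit Defensive.
Import Order.TTheory GRing.Theory Num.Theory.
Local Open Scope ring_scope.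

Definition rembed (R : realType) (m : nat) (v : 'rV[int]_m) : 'rV[R]_m :=
  map_mx (fun z : int => z%:~R) v.

Definition padic_rat (R : realType) (p : nat) (r : R) : Prop :=
  exists (a : int) (k : nat), r = a%:~R / (p%:R ^+ k).

Definition conic_comb (R : realType) (m n : nat) (a : 'I_n -> 'rV[int]_m)
  (P : 'I_n -> Prop) (Q : R -> Prop) (x : 'rV[R]_m) : Prop :=
  exists lambda : 'I_n -> R,
    [/\ forall i, 0 <= lambda i,
        forall i, Q (lambda i),
        forall i, ~ P i -> lambda i = 0
      & x = \sum_(i < n) lambda i *: rembed R (a i)].

Definition in_cone (R : realType) (m n : nat) (a : 'I_n -> 'rV[int]_m)
  (P : 'I_n -> Prop) (x : 'rV[R]_m) : Prop :=
  conic_comb a P (fun _ => True) x.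

Definition padic_generating (R : realType) (p m n : nat)
  (a : 'I_n -> 'rV[int]_m) (P : 'I_n -> Prop) : Prop :=
  forall x : 'rV[int]_m, in_cone a P (rembed R x) ->
    conic_comb a P (padic_rat p) (rembed R x).

Definition dotv (R : realType) (m : nat) (c x : 'rV[R]_m) : R :=
  \sum_(j < m) c 0 j * x 0 j.

Definition is_face (R : realType) (m : nat) (C F : 'rV[R]_m -> Prop) : Prop :=
  exists (c : 'rV[R]_m) (d : R),
    (forall x, C x -> dotv c x <= d) /\
    (forall x, F x <-> (C x /\ dotv c x = d)).

(** A nonempty face of a cone is cut out by a supporting hyperplane through
    the origin, [c.x <= 0] on the cone with equality exactly on the face.
    In a conic combination [x = sum l_i a_i] every term [l_i (c.a_i)] is
    nonpositive, so [c.x = 0] forces [l_i = 0] whenever [c.a_i < 0], i.e.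
    whenever [a_i] lies outside the face.  Hence every conic representation
    of a point of the face, p-adic or not, only uses generators in the face. *)

From HB Require Import structures.
From mathcomp Require Import all_boot all_order all_algebra.
From mathcomp Require Import reals.
Set Implicit Arguments. Unset Strict Implicit. Unset Printing Implicit Defensive.
Import Order.TTheory GRing.Theory Num.Theory.
Local Open Scope ring_scope.

Lemma psumr_mul_le0_eq0 (R : numDomainType) (I : finType) (l v : I -> R) :
  (forall i, 0 <= l i) -> (forall i, v i <= 0) ->
  \sum_i l i * v i = 0 -> forall i, l i * v i = 0.
Proof.
move=> l_ge0 v_le0 sum0 i; apply/eqP; rewrite -oppr_eq0; apply/eqP.
apply: (@psumr_eq0P _ _ predT (fun j => - (l j * v j))) => //.
  by move=> j _; rewrite oppr_ge0 mulr_ge0_le0.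
by rewrite sumrN sum0 oppr0.
Qed.

Section DotProduct.

Variables (R : realType) (m : nat).
Implicit Types (c x : 'rV[R]_m).

Lemma dotvZ c k x : dotv c (k *: x) = k * dotv c x.
Proof.
rewrite /dotv mulr_sumr; apply: eq_bigr => j _.
by rewrite mxE mulrCA.
Qed.

Lemma dotv_sum c (I : finType) (l : I -> R) (v : I -> 'rV[R]_m) :
  dotv c (\sum_i l i *: v i) = \sum_i l i * dotv c (v i).
Proof.
rewrite {1}/dotv.
under eq_bigr => j _ do rewrite summxE mulr_sumr.
by rewrite exchange_big; apply: eq_bigr => i _; rewrite -dotvZ.
Qed.

End DotProduct.

Section Cones.

Variables (R : realType) (m n : nat) (a : 'I_n -> 'rV[int]_m).
Implicit Types (P : 'I_n -> Prop) (Q : R -> Prop) (c x : 'rV[R]_m).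

Lemma conic_comb_sub P (P' : 'I_n -> Prop) Q x :
  (forall i, P i -> P' i) -> conic_comb a P Q x -> conic_comb a P' Q x.
Proof.
move=> PP' [l [l_ge0 Ql lP ->]]; exists l; split=> // i nP'i.
by apply: lP => /PP'.
Qed.

Lemma in_cone_gen P i : P i -> in_cone a P (rembed R (a i)).
Proof.
move=> Pi; exists (fun j => (j == i)%:R); split=> //.
- by move=> j nPj; case: eqP => // ji; rewrite ji in nPj.
rewrite (bigD1 i) //= eqxx scale1r big1 ?addr0 // => j /negbTE ->.
by rewrite scale0r.
Qed.

Lemma in_coneZ P k x : 0 <= k -> in_cone a P x -> in_cone a P (k *: x).
Proof.
move=> k_ge0 [l [l_ge0 _ lP ->]]; exists (fun i => k * l i); split=> //.
- by move=> i; rewrite mulr_ge0.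
- by move=> i /lP ->; rewrite mulr0.
by rewrite scaler_sumr; apply: eq_bigr => i _; rewrite scalerA.
Qed.

Lemma cone_supporting_rhs_eq0 P c d x :
  (forall y, in_cone a P y -> dotv c y <= d) ->
  in_cone a P x -> dotv c x = d -> d = 0.
Proof.
move=> c_le_d Cx cx_d; apply/eqP; rewrite eq_le.
have := c_le_d _ (in_coneZ (ler0n _ 2) Cx).
have := c_le_d _ (in_coneZ (lexx 0) Cx).
rewrite !dotvZ cx_d mul0r => d_ge0.
by rewrite mulr_natl mulr2n -lerBrDr subrr => ->.
Qed.

Lemma conic_comb_dotv0 P Q c x :
  (forall i, P i -> dotv c (rembed R (a i)) = 0) ->
  conic_comb a P Q x -> dotv c x = 0.
Proof.
move=> cP [l [_ _ lP ->]]; rewrite dotv_sum big1 // => i _.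
have [-> | cai] := eqVneq (dotv c (rembed R (a i))) 0; first by rewrite mulr0.
by rewrite lP ?mul0r // => /cP; apply/eqP.
Qed.

Lemma conic_comb_face_support P Q c x :
  (forall i, dotv c (rembed R (a i)) <= 0) ->
  conic_comb a P Q x -> dotv c x = 0 ->
  conic_comb a (fun i => P i /\ dotv c (rembed R (a i)) = 0) Q x.
Proof.
move=> c_le0 [l [l_ge0 Ql lP ex]]; rewrite ex dotv_sum => sum0.
exists l; split=> // i not_PFi.
have [cai0 | cai] := eqVneq (dotv c (rembed R (a i))) 0.
  by apply: lP => Pi; apply: not_PFi.
apply/eqP; move: (psumr_mul_le0_eq0 l_ge0 c_le0 sum0 i) => /eqP.
by rewrite mulf_eq0 (negbTE cai) orbF.
Qed.

End Cones.

Theorem proposition3p5 (R : realType) (p m n : nat) (a : 'I_n -> 'rV[int]_m)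
  (F : 'rV[R]_m -> Prop) :
  prime p ->
  padic_generating R p a (fun _ => True) ->
  is_face (in_cone a (fun _ => True)) F ->
  (exists x, F x) ->
  (forall x, F x <-> in_cone a (fun i => F (rembed R (a i))) x) /\
  padic_generating R p a (fun i => F (rembed R (a i))).
Proof.
move=> _ gen [c [d [c_le_d F_eq]]] [x0 /F_eq [Cx0 cx0]].
have d0 := cone_supporting_rhs_eq0 c_le_d Cx0 cx0.
rewrite {}d0 {x0 Cx0 cx0} in c_le_d F_eq.
have C_gen i : in_cone a (fun _ => True) (rembed R (a i)) by exact: in_cone_gen.
have c_le0 i := c_le_d _ (C_gen i).
have F_gen i : F (rembed R (a i)) <-> dotv c (rembed R (a i)) = 0.
  by split=> [/F_eq [] // | cai]; apply/F_eq.
have face_supported Q x : conic_comb a (fun _ => True) Q x -> dotv c x = 0 ->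
    conic_comb a (fun i => F (rembed R (a i))) Q x.
  move=> Cx cx0'; apply: conic_comb_sub (conic_comb_face_support c_le0 Cx cx0').
  by move=> i [_ /F_gen].
have F_cone x : F x <-> in_cone a (fun i => F (rembed R (a i))) x.
  split=> [/F_eq [Cx cx] | Cx]; first exact: face_supported.
  apply/F_eq; split; first exact: conic_comb_sub Cx.
  by apply: conic_comb_dotv0 Cx => i /F_gen.
split=> // x /F_cone /F_eq [Cx cx].
exact: face_supported (gen x Cx) cx.
Qed.
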